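(* Let $N$ be a natural number, $\delta\subseteq{}^{\underline N}2$ and $0<k<N$. Then $\mathrm{HN}(\delta)>k$ if and only if there is $\delta^*\subseteq{}^{\underline N}2$ such that $\delta\preceq\delta^*$ and the elements of $\delta^*$ have pairwise disjoint domains, each of size $k$. In particular, if there is a $k$-selector for $\delta$, then $\mathrm{HN}(\delta)\geq k+1$.
   Context: $N=\{0,\ldots,N-1\}$; ${}^{\underline N}2$ is the set of all partial functions $\sigma$ with $\mathrm{dom}(\sigma)\subseteq N$ and values in $\{0,1\}$ (the empty function included). For $\delta_1,\delta_2\subseteq{}^{\underline N}2$, $\delta_1\preceq\delta_2$ means that for every $\sigma\in\delta_1$ there is $\rho\in\delta_2$ with $\rho\subseteq\sigma$. For $\delta\subseteq{}^{\underline N}2$, $\mathrm{hn}(\delta)$ is the maximum of $k+1$ over those $k\in\{0,\ldots,N-1\}$ such that for every $\delta'\subseteq\delta$ there is $\delta''\subseteq\delta'$ whose elements have pairwise disjoint domains and $|\bigcup_{\sigma\in\delta''}\mathrm{dom}(\sigma)|\geq k|\delta'|$; and $\mathrm{HN}(\delta)=\max\{\mathrm{hn}(\delta'):\delta'\subseteq{}^{\underline N}2,\ \delta\preceq\delta'\}$. A $k$-selector for $\delta$ is a function $F$ from $\delta$ to $k$-element subsets of $N$ such that for $\sigma,\rho\in\delta$: $F(\sigma)\subseteq\mathrm{dom}(\sigma)$, and $F(\sigma)\cap F(\rho)=\emptyset$ iff $\sigma\neq\rho$. *)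

From mathcomp Require Import all_boot.
Set Implicit Arguments. Unset Strict Implicit. Unset Printing Implicit Defensive.

(* Partial functions sigma with dom(sigma) ⊆ N = {0..N-1} and values in {0,1}:
   a finite function 'I_N -> option bool (None = undefined). *)
Definition pfun (N : nat) := {ffun 'I_N -> option bool}.

Definition dom (N : nat) (s : pfun N) : {set 'I_N} := [set i | s i != None].

Definition subpf (N : nat) (rho sigma : pfun N) : bool :=
  [forall i, (rho i != None) ==> (sigma i == rho i)].

Definition preceq (N : nat) (d1 d2 : {set pfun N}) : bool :=
  [forall s in d1, exists r in d2, subpf r s].

Definition pw_disjoint_dom (N : nat) (d : {set pfun N}) : bool :=
  [forall s in d, forall r in d, (s != r) ==> [disjoint dom s & dom r]].

Definition hn_prop (N : nat) (d : {set pfun N}) (k : nat) : bool :=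
  [forall d' : {set pfun N}, (d' \subset d) ==>
     [exists d'' : {set pfun N}, [&& d'' \subset d', pw_disjoint_dom d'' &
        k * #|d'| <= #|\bigcup_(s in d'') dom s| ]]].

Definition hn (N : nat) (d : {set pfun N}) : nat :=
  \max_(k < N | hn_prop d k) k.+1.

Definition HN (N : nat) (d : {set pfun N}) : nat :=
  \max_(d' : {set pfun N} | preceq d d') hn d'.

(* F is a k-selector for delta (F given as a total function, only its
   restriction to delta matters) *)
Definition selector (N : nat) (k : nat) (d : {set pfun N})
    (F : pfun N -> {set 'I_N}) : Prop :=
  (forall s, s \in d -> #|F s| = k /\ F s \subset dom s) /\
  (forall s r, s \in d -> r \in d -> (F s :&: F r = set0 <-> s <> r)).

From mathcomp Require Import all_boot.
Set Implicit Arguments. Unset Strict Implicit. Unset Printing Implicit Defensive.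

(* If the elements of dstar have pairwise disjoint domains of size k, then
   [hn_prop dstar k] holds with d'' = d', so HN delta > k.  Conversely, if
   hn d > k for some d above delta, every subfamily J of d satisfies
   k |J| <= |U_(s in J) dom s|.  This is the hypothesis of the k-fold Hall
   theorem, which yields pairwise disjoint k-sets B s included in dom s; the
   restrictions of the s in d to B s form dstar.  A k-selector provides such
   sets B s directly.  Hall's theorem is proved by Rado's argument (shrink some
   A i of size >= 2 while keeping Hall's condition), and its k-fold version by
   applying it to k copies of every index. *)

Lemma card_bigcup_disjoint (I T : finType) (D : {set I}) (F : I -> {set T}) :
  {in D &, forall i j, i != j -> [disjoint F i & F j]} ->
  #|\bigcup_(i in D) F i| = \sum_(i in D) #|F i|.
Proof.
move=> disjF; pose G i := if i \in D then F i else set0.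
have disjG i j : i != j -> [disjoint G i & G j].
  rewrite /G -setI_eq0; case: ifP => iD; case: ifP => jD; rewrite ?setI0 ?set0I //.
  by rewrite setI_eq0; apply: disjF.
have -> : \bigcup_(i in D) F i = \bigcup_i G i.
  by rewrite big_mkcond.
rewrite -sum1_card (partition_disjoint_bigcup _ _ disjG) [RHS]big_mkcond /=.
by apply: eq_bigr => i _; rewrite /G; case: ifP; rewrite ?sum1_card ?cards0.
Qed.

Section Hall.
Variables (I T : finType) (D : {set I}).

Definition hall_cond (A : I -> {set T}) : bool :=
  [forall J : {set I}, (J \subset D) ==> (#|J| <= #|\bigcup_(i in J) A i|)].

Lemma hall_condP A :
  reflect (forall J : {set I}, J \subset D -> #|J| <= #|\bigcup_(i in J) A i|) (hall_cond A).
Proof.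
apply: (iffP forallP) => [h J | h J]; first exact/implyP.
exact/implyP/h.
Qed.

Definition shrink (A : I -> {set T}) i z j := if j == i then A i :\ z else A j.

Lemma bigcup_shrink_notin A i z (J : {set I}) :
  i \notin J -> \bigcup_(j in J) shrink A i z j = \bigcup_(j in J) A j.
Proof.
by move=> iJ; apply: eq_bigr => j jJ; rewrite /shrink; case: eqP => // ji; rewrite -ji jJ in iJ.
Qed.

Lemma bigcup_shrinkU1 A i z (K : {set I}) :
  i \notin K -> \bigcup_(j in i |: K) shrink A i z j = (A i :\ z) :|: \bigcup_(j in K) A j.
Proof.
by move=> iK; rewrite big_setU1 //= bigcup_shrink_notin // /shrink eqxx.
Qed.

Lemma sum_card_shrink (A : I -> {set T}) i z : i \in D -> z \in A i ->
  \sum_(j in D) #|shrink A i z j| < \sum_(j in D) #|A j|.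
Proof.
move=> iD zA; rewrite (bigD1 i iD) [X in _ < X](bigD1 i iD) /= {1}/shrink eqxx.
rewrite (cardsD1 z (A i)) zA add1n ltnS leq_add2l.
by apply: eq_leq; apply: eq_bigr => j /andP[_ /negPf ji]; rewrite /shrink ji.
Qed.

Lemma shrink_violator A i z : hall_cond A -> ~~ hall_cond (shrink A i z) ->
  exists K : {set I},
    [/\ K \subset D, i \notin K & #|(A i :\ z) :|: \bigcup_(j in K) A j| <= #|K|].
Proof.
move=> /hall_condP hallA /forallPn[J]; rewrite negb_imply -ltnNge => /andP[JD ltJ].
have iJ : i \in J.
  by apply: contraTT ltJ => iJ; rewrite -leqNgt bigcup_shrink_notin // hallA.
exists (J :\ i); split; first exact: subset_trans (subsetDl _ _) JD.
  by rewrite setD11.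
move: ltJ; rewrite -{1}(setD1K iJ) bigcup_shrinkU1 ?setD11 //.
by rewrite (cardsD1 i J) iJ ltnS.
Qed.

Lemma hall_shrink A i : hall_cond A -> i \in D -> 1 < #|A i| ->
  exists2 z, z \in A i & hall_cond (shrink A i z).
Proof.
move=> hallA iD /card_gt1P[x [y [xA yA xy]]].
have [|/(shrink_violator hallA)[K1 [K1D iK1 le1]]] := boolP (hall_cond (shrink A i x)).
  by exists x.
have [|/(shrink_violator hallA)[K2 [K2D iK2 le2]]] := boolP (hall_cond (shrink A i y)).
  by exists y.
(* Hall's condition on i |: (K1 :|: K2) and on K1 :&: K2 gives
   |K1 :|: K2| + 1 + |K1 :&: K2| <= |U1| + |U2| <= |K1| + |K2|. *)
set U1 := _ :|: _ in le1; set U2 := _ :|: _ in le2.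
have cupU : \bigcup_(j in i |: (K1 :|: K2)) A j \subset U1 :|: U2.
  apply/bigcupsP => j; rewrite !inE => /or3P[/eqP->|jK|jK]; apply/subsetP => w wA;
    rewrite /U1 /U2 !inE ?wA ?andbT.
  - by case: (eqVneq w x) => [->|]; rewrite ?xy ?orbT.
  - by rewrite (subsetP (bigcup_sup j jK)) ?orbT.
  - by rewrite (subsetP (bigcup_sup j jK)) ?orbT.
have capU : \bigcup_(j in K1 :&: K2) A j \subset U1 :&: U2.
  apply/bigcupsP => j; rewrite inE => /andP[jK1 jK2]; apply/subsetP => w wA.
  by rewrite /U1 /U2 !inE !(subsetP (bigcup_sup j _) _ wA) ?orbT.
have /hall_condP hallAP := hallA.
have subU : i |: (K1 :|: K2) \subset D by rewrite subUset sub1set iD subUset K1D K2D.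
have subI : K1 :&: K2 \subset D by rewrite subIset ?K1D.
have leU := leq_trans (hallAP _ subU) (subset_leq_card cupU).
have leI := leq_trans (hallAP _ subI) (subset_leq_card capU).
rewrite cardsU1 !inE (negPf iK1) (negPf iK2) add1n in leU.
have := leq_add leU leI; rewrite addSn !cardsUI => /leq_trans/(_ (leq_add le1 le2)).
by rewrite ltnn.
Qed.

Lemma hall_card_le1 (x0 : T) A : hall_cond A -> (forall i, i \in D -> #|A i| <= 1) ->
  exists f : I -> T, (forall i, i \in D -> f i \in A i) /\ {in D &, injective f}.
Proof.
move=> /hall_condP hallA le1.
pose f i := odflt x0 [pick z in A i].
have Af i : i \in D -> A i = [set f i].
  move=> iD; have /cards1P[a Aa] : #|A i| == 1.
    rewrite eqn_leq le1 //=; have := hallA [set i].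
    by rewrite sub1set iD cards1 big_set1 => /(_ isT).
  by rewrite /f Aa; case: pickP => [w|/(_ a)]; rewrite !inE ?eqxx // => /eqP ->.
exists f; split=> [i iD | j j' jD j'D fj]; first by rewrite Af ?set11.
apply/eqP/contraT => jj'; have := hallA [set j; j'].
rewrite subUset !sub1set jD j'D cards2 jj' big_setU1 /=; last by rewrite inE.
by rewrite big_set1 (Af j) // (Af j') // fj setUid cards1 => /(_ isT).
Qed.

Theorem hall_marriage (x0 : T) A : hall_cond A ->
  exists f : I -> T, (forall i, i \in D -> f i \in A i) /\ {in D &, injective f}.
Proof.
have [n] := ubnP (\sum_(i in D) #|A i|); elim: n A => // n IH A ltn hallA.
have [/existsP[i /andP[iD gt1]] | /existsPn le1] := boolP [exists i in D, 1 < #|A i|].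
  have [z zA hallz] := hall_shrink hallA iD gt1.
  have [f [fA finj]] := IH _ (leq_trans (sum_card_shrink iD zA) ltn) hallz.
  exists f; split=> // j jD; have := fA j jD.
  by rewrite /shrink; case: eqP => [-> /setD1P[]|].
apply: (hall_card_le1 x0 hallA) => i iD.
by rewrite leqNgt; apply: contraNN (le1 i) => ->; rewrite iD.
Qed.
End Hall.

Lemma hall_multiple (I T : finType) (x0 : T) (D : {set I}) (k : nat) (A : I -> {set T}) :
  (forall J : {set I}, J \subset D -> k * #|J| <= #|\bigcup_(i in J) A i|) ->
  exists B : I -> {set T},
    (forall i, i \in D -> #|B i| = k /\ B i \subset A i) /\
    {in D &, forall i j, i != j -> [disjoint B i & B j]}.
Proof.
move=> hallk; pose A' (p : I * 'I_k) := A p.1.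
have hallA' : hall_cond (setX D [set: 'I_k]) A'.
  apply/hall_condP => J JDk; pose J1 := [set p.1 | p in J].
  have J1D : J1 \subset D.
    apply/subsetP => _ /imsetP[p /(subsetP JDk) pDk ->].
    by move: pDk; rewrite inE => /andP[].
  have cardJ : #|J| <= #|J1| * k.
    rewrite -[X in _ * X]card_ord -cardsT -cardsX; apply/subset_leq_card/subsetP => p pJ.
    by rewrite inE in_setT andbT imset_f.
  have cupJ : \bigcup_(i in J1) A i \subset \bigcup_(p in J) A' p.
    by apply/bigcupsP => _ /imsetP[p pJ ->]; apply: (bigcup_sup p pJ).
  by rewrite (leq_trans cardJ) // mulnC (leq_trans (hallk _ J1D)) ?subset_leq_card.
have [f [fA finj]] := hall_marriage x0 hallA'.
have finjk i : i \in D -> injective (fun t => f (i, t)).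
  by move=> iD t t' /finj; rewrite !inE iD => /(_ isT isT) [].
exists (fun i => [set f (i, t) | t : 'I_k]); split=> [i iD | i j iD jD ij].
  rewrite card_imset ?cardsT ?card_ord; last exact: finjk.
  split=> //; apply/subsetP => _ /imsetP[t _ ->].
  by apply: (fA (i, t)); rewrite in_setX iD in_setT.
apply/pred0Pn => -[_ /andP[/imsetP[t _ ->] /imsetP[t' _ /finj]]].
by rewrite !in_setX iD jD !in_setT => /(_ isT isT) [eij _]; rewrite eij eqxx in ij.
Qed.

Lemma bigmax_gtP (I : finType) (P : pred I) (F : I -> nat) m :
  reflect (exists2 i, P i & m < F i) (m < \max_(i | P i) F i).
Proof.
apply: (iffP idP) => [|[i Pi]]; last by move/leq_trans; apply; apply: leq_bigmax_cond.
have [/existsP[i /andP[Pi ltm]] _|/existsPn none] := boolP [exists i, P i && (m < F i)].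
  by exists i.
rewrite ltnNge => /bigmax_leqP[] i Pi.
by move: (none i); rewrite Pi -leqNgt.
Qed.

Section HN.
Variable N : nat.
Implicit Types (s r : pfun N) (d : {set pfun N}) (B : {set 'I_N}).

Lemma subpfP r s : reflect (forall i, r i != None -> s i = r i) (subpf r s).
Proof. by apply: (iffP forallP) => h i; [move/(implyP (h i))/eqP | apply/implyP => /h ->]. Qed.

Lemma subpf_trans s1 s2 s3 : subpf s1 s2 -> subpf s2 s3 -> subpf s1 s3.
Proof.
move=> /subpfP h12 /subpfP h23; apply/subpfP => i s1i.
by rewrite h23 ?h12.
Qed.

Lemma preceqP d1 d2 :
  reflect (forall s, s \in d1 -> exists2 r, r \in d2 & subpf r s) (preceq d1 d2).
Proof.
apply: (iffP forall_inP) => h s /h; first by case/exists_inP=> r; exists r.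
by case=> r r2 rs; apply/exists_inP; exists r.
Qed.

Lemma preceq_trans d1 d2 d3 : preceq d1 d2 -> preceq d2 d3 -> preceq d1 d3.
Proof.
move=> /preceqP h12 /preceqP h23; apply/preceqP => s /h12[r /h23[t t3 tr] rs].
by exists t; last exact: subpf_trans tr rs.
Qed.

Lemma pw_disjoint_domP d :
  reflect {in d &, forall s r, s != r -> [disjoint dom s & dom r]} (pw_disjoint_dom d).
Proof.
apply: (iffP forall_inP) => [h s r sd rd | h s sd].
  exact: implyP (forall_inP (h s sd) r rd).
by apply/forall_inP => r rd; apply/implyP; apply: h.
Qed.

Lemma hn_propP d k :
  reflect (forall d' : {set pfun N}, d' \subset d -> exists d'' : {set pfun N},
             [/\ d'' \subset d', pw_disjoint_dom d'' &
                 k * #|d'| <= #|\bigcup_(s in d'') dom s|])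
          (hn_prop d k).
Proof.
apply: (iffP forallP) => h d'.
  by move=> /(implyP (h d'))/existsP[d'' /and3P[]]; exists d''.
by apply/implyP => /h[d'' [? ? ?]]; apply/existsP; exists d''; apply/and3P.
Qed.

Lemma hn_prop_le d j k : k <= j -> hn_prop d j -> hn_prop d k.
Proof.
move=> kj /hn_propP hj; apply/hn_propP => d' /hj[d'' [sub disj le]].
by exists d''; split=> //; rewrite (leq_trans _ le) // leq_mul2r kj orbT.
Qed.

Lemma hn_prop_card_bigcup d k : hn_prop d k ->
  forall J : {set pfun N}, J \subset d -> k * #|J| <= #|\bigcup_(s in J) dom s|.
Proof.
move=> /hn_propP hk J /hk[d'' [sub _ le]].
rewrite (leq_trans le) // subset_leq_card //.
by apply/bigcupsP => s /(subsetP sub) sJ; apply: bigcup_sup.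
Qed.

Lemma hn_prop_uniform d k : pw_disjoint_dom d ->
  (forall s, s \in d -> #|dom s| = k) -> hn_prop d k.
Proof.
move=> /pw_disjoint_domP disj domk; apply/hn_propP => d' sub; exists d'.
have disj' : {in d' &, forall s r, s != r -> [disjoint dom s & dom r]}.
  by move=> s r /(subsetP sub) sd /(subsetP sub) rd; apply: disj.
split; [exact: subxx | exact/pw_disjoint_domP |].
rewrite (card_bigcup_disjoint disj') (eq_bigr (fun=> k)) => [|s /(subsetP sub)/domk //].
by rewrite sum_nat_const mulnC.
Qed.

Lemma ltn_hn d k : k < N -> (k < hn d) = hn_prop d k.
Proof.
move=> kN; apply/bigmax_gtP/idP => [[j dj kj] | dk]; first exact: hn_prop_le dj.
by exists (Ordinal kN).
Qed.

Lemma ltn_HN (delta : {set pfun N}) k :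
  reflect (exists2 d, preceq delta d & k < hn d) (k < HN delta).
Proof. exact: bigmax_gtP. Qed.

Definition restrict s (B : {set 'I_N}) : pfun N :=
  [ffun i => if i \in B then s i else None].

Lemma dom_restrict s B : B \subset dom s -> dom (restrict s B) = B.
Proof.
move=> /subsetP Bs; apply/setP => i; rewrite !inE ffunE.
by case: ifPn => [/Bs|]; rewrite ?inE ?eqxx.
Qed.

Lemma subpf_restrict s B : subpf (restrict s B) s.
Proof. by apply/subpfP => i; rewrite ffunE; case: ifP; rewrite ?eqxx. Qed.

Definition disjoint_uniform_above k (delta dstar : {set pfun N}) : Prop :=
  [/\ preceq delta dstar, pw_disjoint_dom dstar & forall s, s \in dstar -> #|dom s| = k].

Lemma restrict_disjoint_uniform d k (B : pfun N -> {set 'I_N}) :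
  (forall s, s \in d -> #|B s| = k /\ B s \subset dom s) ->
  {in d &, forall s r, s != r -> [disjoint B s & B r]} ->
  disjoint_uniform_above k d [set restrict s (B s) | s in d].
Proof.
move=> Bk disjB; split.
- apply/preceqP => s sd; exists (restrict s (B s)); first exact: imset_f.
  exact: subpf_restrict.
- apply/pw_disjoint_domP => _ _ /imsetP[s sd ->] /imsetP[r rd ->] neq.
  have [_ Bs] := Bk s sd; have [_ Br] := Bk r rd.
  rewrite !dom_restrict //; apply: disjB => //.
  by apply: contraNneq neq => ->.
- by move=> _ /imsetP[s sd ->]; have [Bsk Bs] := Bk s sd; rewrite dom_restrict.
Qed.

Lemma ltn_HN_disjoint_uniform delta k : k < N ->
  reflect (exists dstar, disjoint_uniform_above k delta dstar) (k < HN delta).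
Proof.
move=> kN; apply: (iffP (ltn_HN delta k)) => [[d delta_d] | [dstar [delta_dstar disj domk]]].
  rewrite ltn_hn // => hnd.
  have [B [Bk disjB]] := hall_multiple (Ordinal kN) (hn_prop_card_bigcup hnd).
  have [d_dstar disj domk] := restrict_disjoint_uniform Bk disjB.
  by exists [set restrict s (B s) | s in d]; split=> //; apply: preceq_trans d_dstar.
by exists dstar; rewrite // ltn_hn //; apply: hn_prop_uniform.
Qed.

Lemma selector_disjoint_uniform k delta F : selector k delta F ->
  disjoint_uniform_above k delta [set restrict s (F s) | s in delta].
Proof.
case=> Fk Fdisj; apply: restrict_disjoint_uniform => // s r sd rd neq.
by rewrite -setI_eq0; apply/eqP/(Fdisj s r sd rd)/eqP.
Qed.

End HN.

Theorem proposition6p14 (N : nat) (delta : {set pfun N}) (k : nat) :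
  0 < k < N ->
  (k < HN delta <->
     exists dstar : {set pfun N},
       [/\ preceq delta dstar, pw_disjoint_dom dstar &
           forall s, s \in dstar -> #|dom s| = k]) /\
  ((exists F : pfun N -> {set 'I_N}, selector k delta F) -> k.+1 <= HN delta).
Proof.
case/andP=> _ kN; split; first exact: (iff_sym (rwP (ltn_HN_disjoint_uniform delta kN))).
case=> F /selector_disjoint_uniform selF.
by apply/ltn_HN_disjoint_uniform => //; eexists; exact: selF.
Qed.
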